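(* Let $\phi:K\to[0,\infty)$ be a convex function attaining its minimum value at $0$, and assume $\phi$ is not constant. Then $\lim_{|x|\to\infty}\phi(x)=\infty$.
   Context: $K$ is a field complete with respect to a non-trivial non-archimedean absolute value, $B_K=\{x\in K:|x|\le1\}$. A function $\phi:K\to\mathbb R$ is convex if for all $n$, $x_1,\dots,x_n\in K$ and $\lambda_1,\dots,\lambda_n\in B_K$ with $\sum\lambda_i=1$ one has $\phi(\sum\lambda_ix_i)\le\max_i|\lambda_i|\phi(x_i)$. *)

From HB Require Import structures.
From mathcomp Require Import all_boot all_order all_algebra.
From mathcomp Require Import reals.
Set Implicit Arguments. Unset Strict Implicit. Unset Printing Implicit Defensive.
Import Order.TTheory GRing.Theory Num.Theory.
Local Open Scope ring_scope.

Definition nonarch_abs (R : realType) (K : fieldType) (abs : K -> R) : Prop :=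
  [/\ forall x, 0 <= abs x,
      forall x, abs x = 0 <-> x = 0,
      forall x y, abs (x * y) = abs x * abs y &
      forall x y, abs (x + y) <= Num.max (abs x) (abs y)].

Definition nontrivial_abs (R : realType) (K : fieldType) (abs : K -> R) : Prop :=
  exists x : K, x != 0 /\ abs x != 1.

Definition abs_complete (R : realType) (K : fieldType) (abs : K -> R) : Prop :=
  forall u : nat -> K,
    (forall e : R, 0 < e -> exists N : nat, forall m n : nat,
        (N <= m)%N -> (N <= n)%N -> abs (u m - u n) < e) ->
    exists l : K, forall e : R, 0 < e -> exists N : nat, forall n : nat,
        (N <= n)%N -> abs (u n - l) < e.

(* Convexity in the sense of the paper:
   for all n, x_1..x_n in K and lambda_1..lambda_n in B_K with sum 1,
   phi (sum lambda_i x_i) <= max_i |lambda_i| phi(x_i).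
   (Families are indexed by 'I_n.+1; n = 0 is vacuous since the sum must be 1.) *)
Definition convex_fun (R : realType) (K : fieldType) (abs : K -> R)
    (phi : K -> R) : Prop :=
  forall (n : nat) (x lam : 'I_n.+1 -> K),
    (forall i, abs (lam i) <= 1) ->
    \sum_(i < n.+1) lam i = 1 ->
    phi (\sum_(i < n.+1) lam i * x i)
      <= \big[Num.max/abs (lam ord0) * phi (x ord0)]_(i < n.+1)
           (abs (lam i) * phi (x i)).

From HB Require Import structures.
From mathcomp Require Import all_boot all_order all_algebra.
From mathcomp Require Import reals.
From mathcomp Require Import ring lra.
Set Implicit Arguments. Unset Strict Implicit. Unset Printing Implicit Defensive.
Import Order.TTheory GRing.Theory Num.Theory.
Local Open Scope ring_scope.

(* Pick y with phi 0 < phi y and let |x| >= |y|.  Writing y = l x + (1 - l) 0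
   with l = y / x in B_K, convexity gives
   phi y <= max (|l| phi x, |1 - l| phi 0), and the second term is at most
   phi 0 < phi y.  Hence phi x >= (phi y / |y|) |x|: phi grows at least
   linearly in |x|. *)

Section NonarchAbs.

Variables (R : realType) (K : fieldType) (abs : K -> R).
Hypothesis habs : nonarch_abs abs.

Lemma abs_ge0 (x : K) : 0 <= abs x.
Proof. by case: habs. Qed.

Lemma abs0 : abs 0 = 0.
Proof. by case: habs => _ abs_eq0 _ _; exact/abs_eq0. Qed.

Lemma abs_gt0 (x : K) : x != 0 -> 0 < abs x.
Proof.
case: habs => _ abs_eq0 _ _ xnz; rewrite lt_neqAle abs_ge0 andbT eq_sym.
by apply: contra xnz => /eqP /abs_eq0 ->.
Qed.

Lemma absM (x y : K) : abs (x * y) = abs x * abs y.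
Proof. by case: habs. Qed.

Lemma abs1 : abs 1 = 1.
Proof.
have abs1_neq0 : abs 1 != 0 by apply: lt0r_neq0; apply: abs_gt0; exact: oner_neq0.
by apply: (mulfI abs1_neq0); rewrite -absM !mulr1.
Qed.

Lemma absN (x : K) : abs (- x) = abs x.
Proof.
have absN1 : abs (-1) = 1.
  have sq : abs (-1) * abs (-1) = 1 by rewrite -absM mulrNN mulr1 abs1.
  have := abs_ge0 (-1); nra.
by rewrite -mulN1r absM absN1 mul1r.
Qed.

Lemma absf_div (x y : K) : y != 0 -> abs (x / y) = abs x / abs y.
Proof.
move=> ynz; have ay_neq0 := lt0r_neq0 (abs_gt0 ynz).
rewrite absM; congr (_ * _); apply: (mulfI ay_neq0).
by rewrite -absM mulfV // mulfV // abs1.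
Qed.

Lemma abs_subr_le1 (l : K) : abs l <= 1 -> abs (1 - l) <= 1.
Proof.
case: habs => _ _ _ abs_max l_le1.
by apply: le_trans (abs_max _ _) _; rewrite absN abs1 ge_max lexx.
Qed.

Lemma convex_fun2 (phi : K -> R) (l x z : K) :
  convex_fun abs phi -> abs l <= 1 ->
  phi (l * x + (1 - l) * z) <= Num.max (abs l * phi x) (abs (1 - l) * phi z).
Proof.
move=> hconv l_le1.
pose lam (i : 'I_2) := if i == ord0 then l else 1 - l.
pose xs (i : 'I_2) := if i == ord0 then x else z.
have lam_le1 i : abs (lam i) <= 1.
  by rewrite /lam; case: (i == ord0); last exact: abs_subr_le1.
have lam_sum : \sum_(i < 2) lam i = 1 by rewrite !big_ord_recl big_ord0 /lam /=; ring.
have := hconv 1%N xs lam lam_le1 lam_sum.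
rewrite !big_ord_recl !big_ord0 /lam /xs /= addr0.
by rewrite (maxC _ (abs l * phi x)) maxA maxxx.
Qed.

Lemma convex_lower_linear (phi : K -> R) (y x : K) :
  convex_fun abs phi -> 0 <= phi 0 -> phi 0 < phi y -> abs y <= abs x ->
  phi y * abs x <= abs y * phi x.
Proof.
move=> hconv phi0_ge0 phi0_lt ay_le.
have ynz : y != 0 by apply: contraTneq phi0_lt => ->; rewrite ltxx.
have xnz : x != 0.
  apply: contraTneq ay_le => ->.
  by rewrite abs0 -ltNge abs_gt0.
have ax_gt0 := abs_gt0 xnz.
have l_le1 : abs (y / x) <= 1 by rewrite absf_div // ler_pdivrMr // mul1r.
have := convex_fun2 x 0 hconv l_le1.
rewrite mulr0 addr0 divfK // le_max => /orP [|small].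
  by rewrite absf_div // -(ler_pM2r ax_gt0) mulrAC divfK // lt0r_neq0.
have : abs (1 - y / x) * phi 0 <= phi 0 by have := abs_subr_le1 l_le1; nra.
lra.
Qed.

End NonarchAbs.

Lemma nonconstant_gt_min (T : Type) (R : realType) (phi : T -> R) (a : T) :
  (forall x, phi a <= phi x) -> (exists x y, phi x != phi y) ->
  exists y, phi a < phi y.
Proof.
move=> hmin [x1 [x2 phi12]].
have [phi1a|phi1a] := eqVneq (phi x1) (phi a).
  by exists x2; rewrite lt_neqAle hmin andbT -phi1a.
by exists x1; rewrite lt_neqAle hmin andbT eq_sym.
Qed.

Theorem mainTheorem9 (R : realType) (K : fieldType) (abs : K -> R)
    (habs : nonarch_abs abs) (hnt : nontrivial_abs abs) (hcomp : abs_complete abs)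
    (phi : K -> R)
    (hpos : forall x, 0 <= phi x)
    (hconv : convex_fun abs phi)
    (hmin : forall x, phi 0 <= phi x)
    (hnc : exists x y, phi x != phi y) :
  forall M : R, exists r : R, forall x : K, r < abs x -> M < phi x.
Proof.
move=> M; have [y phiy_gt] := nonconstant_gt_min hmin hnc.
have phiy_gt0 : 0 < phi y := le_lt_trans (hpos 0) phiy_gt.
have ynz : y != 0 by apply: contraTneq phiy_gt => ->; rewrite ltxx.
have ay_gt0 := abs_gt0 habs ynz.
exists (Num.max (abs y) (M * abs y / phi y)) => x.
rewrite gt_max ltr_pdivrMr // => /andP [ay_lt Mphi_lt].
have := convex_lower_linear habs hconv (hpos 0) phiy_gt (ltW ay_lt).
by rewrite -(ltr_pM2l ay_gt0); lra.
Qed.
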